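(* Let $\phi:R\to S$ be an epimorphism of commutative rings, where $S$ is a nonzero ring whose only idempotents are $0$ and $1$. Suppose $\phi(r)$ has a pointwise inverse in $S$ for every $r\in R$. Then $A=\mathrm{Im}(\phi)$ is an integral domain, and the ring map from the field of fractions of $A$ to $S$ extending the inclusion $A\subseteq S$ exists and is an isomorphism; in particular $S$ is a field isomorphic to the fraction field of $A$.
   Context: For $a,b$ in a commutative ring, $b$ is a pointwise inverse of $a$ if $a=a^2b$ and $b=b^2a$. Epimorphism means epimorphism in the category of commutative rings. *)

From HB Require Import structures.
From mathcomp Require Import all_boot all_order all_algebra.
From mathcomp Require Import fraction.
Set Implicit Arguments. Unset Strict Implicit. Unset Printing Implicit Defensive.
Import GRing.Theory.
Local Open Scope ring_scope.

Definition pw_inverse (S : comPzRingType) (a b : S) : Prop :=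
  a = a ^+ 2 * b /\ b = b ^+ 2 * a.

Definition ring_epi (R S : comPzRingType) (phi : {rmorphism R -> S}) : Prop :=
  forall (T : comPzRingType) (g h : {rmorphism S -> T}),
    (forall r : R, g (phi r) = h (phi r)) -> forall s : S, g s = h s.

Definition only_trivial_idempotents (S : comPzRingType) : Prop :=
  forall e : S, e * e = e -> e = 0 \/ e = 1.

Definition in_image (R S : Type) (phi : R -> S) (s : S) : Prop :=
  exists r : R, phi r = s.

From HB Require Import structures.
From mathcomp Require Import all_boot all_order all_algebra.
From mathcomp Require Import fraction ring.
From mathcomp Require Import boolp classical_sets.
Set Implicit Arguments. Unset Strict Implicit. Unset Printing Implicit Defensive.
Import GRing.Theory.
Local Open Scope ring_scope.

(* Each element of the image A of phi is 0 or a unit of S: if b is a pointwise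
   inverse of a, then a * b is an idempotent.  Hence A is a domain and the
   fractions a / b with a, b in A form a subfield K of S.  If some s were
   outside K, Zorn's lemma would give a K-linear p : S -> S with p 1 = 1 and
   p s = 0.  But S acts on the left and on the right on the bimodule of
   A-linear maps S -> S, and these actions become ring morphisms into its
   commutative bicommutant that agree on A; as phi is an epimorphism they
   agree on s, forcing p s = s * p 1, i.e. s = 0.  So S = K, the fraction
   field of A. *)

Lemma add_morph0 (V W : zmodType) (f : V -> W) :
  {morph f : x y / x + y} -> f 0 = 0.
Proof. by move=> fD; apply: (addrI (f 0)); rewrite -fD !addr0. Qed.

Lemma add_morphN (V W : zmodType) (f : V -> W) :
  {morph f : x y / x + y} -> {morph f : x / - x}.
Proof. by move=> fD x; apply: (addrI (f x)); rewrite -fD !subrr (add_morph0 fD). Qed.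

Section LinearOver.
Variables (S : comPzRingType) (P : S -> Prop).

Definition linear_over (f : S -> S) : Prop :=
  {morph f : x y / x + y} /\ (forall a x, P a -> f (a * x) = a * f x).

Lemma linear_over0 : linear_over (fun _ => 0).
Proof. by split => [x y|a x _]; rewrite ?addr0 ?mulr0. Qed.

Lemma linear_overD f g :
  linear_over f -> linear_over g -> linear_over (fun t => f t + g t).
Proof.
move=> [fD fP] [gD gP]; split => [x y|a x Pa]; first by rewrite fD gD addrACA.
by rewrite fP // gP // mulrDr.
Qed.

Lemma linear_overN f : linear_over f -> linear_over (fun t => - f t).
Proof.
move=> [fD fP]; split => [x y|a x Pa]; first by rewrite fD opprD.
by rewrite fP // mulrN.
Qed.

Lemma linear_over_lmul x f : linear_over f -> linear_over (fun t => x * f t).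
Proof.
move=> [fD fP]; split => [a b|a b Pa]; first by rewrite fD mulrDr.
by rewrite fP // mulrCA.
Qed.

Lemma linear_over_rmul y f : linear_over f -> linear_over (fun t => f (y * t)).
Proof.
move=> [fD fP]; split => [a b|a b Pa]; first by rewrite mulrDr fD.
by rewrite /= mulrCA (fP a).
Qed.

Definition linmap := {f : S -> S | linear_over f}.

Lemma linmap_ext (n m : linmap) : sval n =1 sval m -> n = m.
Proof. by case: n m => f fP [g gP] /= /funext fg; apply: eq_exist. Qed.

Definition linmap0 : linmap := exist _ _ linear_over0.
Definition linmap_add (n m : linmap) : linmap :=
  exist _ _ (linear_overD (svalP n) (svalP m)).
Definition linmap_opp (n : linmap) : linmap := exist _ _ (linear_overN (svalP n)).

Lemma linmap_addA : associative linmap_add.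
Proof. by move=> ? ? ?; apply: linmap_ext => t /=; rewrite addrA. Qed.
Lemma linmap_addC : commutative linmap_add.
Proof. by move=> ? ?; apply: linmap_ext => t /=; rewrite addrC. Qed.
Lemma linmap_add0 : left_id linmap0 linmap_add.
Proof. by move=> ?; apply: linmap_ext => t /=; rewrite add0r. Qed.
Lemma linmap_addN : left_inverse linmap0 linmap_opp linmap_add.
Proof. by move=> ?; apply: linmap_ext => t /=; rewrite addNr. Qed.

End LinearOver.

Lemma linear_overW (S : comPzRingType) (P Q : S -> Prop) f :
  (forall a, P a -> Q a) -> linear_over Q f -> linear_over P f.
Proof. by move=> PQ [fD fQ]; split => // a x /PQ; apply: fQ. Qed.

HB.instance Definition _ (S : comPzRingType) (P : S -> Prop) :=
  gen_eqMixin (linmap P).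
HB.instance Definition _ (S : comPzRingType) (P : S -> Prop) :=
  gen_choiceMixin (linmap P).
HB.instance Definition _ (S : comPzRingType) (P : S -> Prop) :=
  GRing.isZmodule.Build (linmap P)
    (@linmap_addA S P) (@linmap_addC S P) (@linmap_add0 S P) (@linmap_addN S P).

Section Bicommutant.
Variables (S : comPzRingType) (P : S -> Prop).
Local Notation N := (linmap P).

Definition linmap_lmul (x : S) (n : N) : N := exist _ _ (linear_over_lmul x (svalP n)).
Definition linmap_rmul (y : S) (n : N) : N := exist _ _ (linear_over_rmul y (svalP n)).

Definition bimodule_endo (G : N -> N) : Prop :=
  {morph G : n m / n + m} /\
  (forall x n, G (linmap_lmul x n) = linmap_lmul x (G n)) /\
  (forall y n, G (linmap_rmul y n) = linmap_rmul y (G n)).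

Lemma linmap_lmul_endo x : bimodule_endo (linmap_lmul x).
Proof.
split=> [n m|]; first by apply: linmap_ext => t /=; rewrite mulrDr.
by split=> [x' n|y n]; apply: linmap_ext => t /=; first exact: mulrCA.
Qed.

Lemma linmap_rmul_endo y : bimodule_endo (linmap_rmul y).
Proof.
split=> [n m|]; first exact: linmap_ext.
by split=> [x n|y' n]; apply: linmap_ext => t /=; last rewrite mulrCA.
Qed.

(* A commutative stand-in for the tensor square of S over P. *)
Record bicommutant := Bicommutant {
  bc_fun : N -> N;
  bc_additive : {morph bc_fun : n m / n + m};
  bc_central : forall G, bimodule_endo G -> forall n, bc_fun (G n) = G (bc_fun n) }.

Lemma bicommutant_ext (F G : bicommutant) : bc_fun F =1 bc_fun G -> F = G.
Proof.
case: F G => f fD fC [g gD gC] /= /funext fg; subst g.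
by rewrite (Prop_irrelevance fD gD) (Prop_irrelevance fC gC).
Qed.

Definition bc0 : bicommutant :=
  @Bicommutant (fun _ => 0) (fun _ _ => esym (addr0 0))
    (fun G hG _ => esym (add_morph0 hG.1)).

Definition bc1 : bicommutant := @Bicommutant id (fun _ _ => erefl) (fun _ _ _ => erefl).

Definition bc_add (F G : bicommutant) : bicommutant.
Proof.
refine (@Bicommutant (fun n => bc_fun F n + bc_fun G n) _ _).
  by move=> n m; rewrite !bc_additive addrACA.
by move=> H hH n; rewrite (bc_central F hH) (bc_central G hH) hH.1.
Defined.

Definition bc_opp (F : bicommutant) : bicommutant.
Proof.
refine (@Bicommutant (fun n => - bc_fun F n) _ _).
  by move=> n m; rewrite bc_additive opprD.
by move=> H hH n; rewrite (bc_central F hH) (add_morphN hH.1).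
Defined.

Definition bc_mul (F G : bicommutant) : bicommutant.
Proof.
refine (@Bicommutant (fun n => bc_fun F (bc_fun G n)) _ _).
  by move=> n m; rewrite !bc_additive.
by move=> H hH n; rewrite (bc_central G hH) (bc_central F hH).
Defined.

Lemma bc_addA : associative bc_add.
Proof. by move=> ? ? ?; apply: bicommutant_ext => n /=; rewrite addrA. Qed.
Lemma bc_addC : commutative bc_add.
Proof. by move=> ? ?; apply: bicommutant_ext => n /=; rewrite addrC. Qed.
Lemma bc_add0 : left_id bc0 bc_add.
Proof. by move=> ?; apply: bicommutant_ext => n /=; rewrite add0r. Qed.
Lemma bc_addN : left_inverse bc0 bc_opp bc_add.
Proof. by move=> ?; apply: bicommutant_ext => n /=; rewrite addNr. Qed.
Lemma bc_mulA : associative bc_mul.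
Proof. by move=> ? ? ?; apply: bicommutant_ext. Qed.
Lemma bc_mul1 : left_id bc1 bc_mul.
Proof. by move=> ?; apply: bicommutant_ext. Qed.
Lemma bc_mulDl : left_distributive bc_mul bc_add.
Proof. by move=> ? ? ?; apply: bicommutant_ext. Qed.

(* The left and right multiplications commute, so they lie in their own
   commutant; hence so does every element of the bicommutant. *)
Lemma bicommutant_endo (F : bicommutant) : bimodule_endo (bc_fun F).
Proof.
split; first exact: bc_additive.
by split=> [x|y] n; apply: bc_central;
  [apply: linmap_lmul_endo | apply: linmap_rmul_endo].
Qed.

Lemma bc_mulC : commutative bc_mul.
Proof.
by move=> F G; apply: bicommutant_ext => n /=; apply: bc_central; apply: bicommutant_endo.
Qed.

End Bicommutant.

HB.instance Definition _ (S : comPzRingType) (P : S -> Prop) :=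
  gen_eqMixin (bicommutant P).
HB.instance Definition _ (S : comPzRingType) (P : S -> Prop) :=
  gen_choiceMixin (bicommutant P).
HB.instance Definition _ (S : comPzRingType) (P : S -> Prop) :=
  GRing.isZmodule.Build (bicommutant P)
    (@bc_addA S P) (@bc_addC S P) (@bc_add0 S P) (@bc_addN S P).
HB.instance Definition _ (S : comPzRingType) (P : S -> Prop) :=
  GRing.Zmodule_isComPzRing.Build (bicommutant P)
    (@bc_mulA S P) (@bc_mulC S P) (@bc_mul1 S P) (@bc_mulDl S P).

Section BimoduleActions.
Variables (S : comPzRingType) (P : S -> Prop).

Definition bc_lmul (x : S) : bicommutant P :=
  @Bicommutant S P (linmap_lmul x) (linmap_lmul_endo P x).1
    (fun G hG n => esym (hG.2.1 x n)).

Definition bc_rmul (y : S) : bicommutant P :=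
  @Bicommutant S P (linmap_rmul y) (linmap_rmul_endo P y).1
    (fun G hG n => esym (hG.2.2 y n)).

Lemma bc_lmul_is_zmod : zmod_morphism bc_lmul.
Proof.
by move=> x y; apply: bicommutant_ext => n; apply: linmap_ext => t /=; rewrite mulrBl.
Qed.

Lemma bc_lmul_is_monoid : monoid_morphism bc_lmul.
Proof.
split=> [|x y]; apply: bicommutant_ext => n; apply: linmap_ext => t /=.
  by rewrite mul1r.
by rewrite mulrA.
Qed.

Lemma bc_rmul_is_zmod : zmod_morphism bc_rmul.
Proof.
move=> x y; apply: bicommutant_ext => n; apply: linmap_ext => t.
by case: n => f [fD _] /=; rewrite mulrBl fD (add_morphN fD).
Qed.

Lemma bc_rmul_is_monoid : monoid_morphism bc_rmul.
Proof.
split=> [|x y]; apply: bicommutant_ext => n; apply: linmap_ext => t /=.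
  by rewrite mul1r.
by rewrite mulrCA mulrA.
Qed.

Lemma bc_lmul_rmul a : P a -> bc_lmul a = bc_rmul a.
Proof.
move=> Pa; apply: bicommutant_ext => n; apply: linmap_ext => t.
by case: n => f [_ fP] /=; rewrite fP.
Qed.

End BimoduleActions.

HB.instance Definition _ (S : comPzRingType) (P : S -> Prop) :=
  GRing.isZmodMorphism.Build S (bicommutant P) (@bc_lmul S P) (@bc_lmul_is_zmod S P).
HB.instance Definition _ (S : comPzRingType) (P : S -> Prop) :=
  GRing.isMonoidMorphism.Build S (bicommutant P) (@bc_lmul S P) (@bc_lmul_is_monoid S P).
HB.instance Definition _ (S : comPzRingType) (P : S -> Prop) :=
  GRing.isZmodMorphism.Build S (bicommutant P) (@bc_rmul S P) (@bc_rmul_is_zmod S P).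
HB.instance Definition _ (S : comPzRingType) (P : S -> Prop) :=
  GRing.isMonoidMorphism.Build S (bicommutant P) (@bc_rmul S P) (@bc_rmul_is_monoid S P).

(* The two actions of S on the bimodule of image-linear maps agree on the
   image of an epimorphism, hence everywhere. *)
Lemma ring_epi_linear_over (R S : comPzRingType) (phi : {rmorphism R -> S}) f s :
  ring_epi phi -> linear_over (in_image phi) f -> f s = s * f 1.
Proof.
move=> epi fP.
have lr : bc_lmul (in_image phi) s = bc_rmul (in_image phi) s.
  by apply: epi => r; apply: bc_lmul_rmul; exists r.
have := congr1 (fun F => sval (bc_fun F (exist _ f fP)) 1) lr.
by rewrite /= mulr1.
Qed.

Lemma pw_inverse_idempotent (S : comPzRingType) (a b : S) :
  pw_inverse a b -> (a * b) * (a * b) = a * b.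
Proof. by move=> [aE _]; rewrite {3}aE expr2 mulrACA mulrA. Qed.

Lemma pw_inverse_unit_or_zero (S : comPzRingType) (a b : S) :
  only_trivial_idempotents S -> pw_inverse a b -> a = 0 \/ a * b = 1.
Proof.
move=> idem ab; case: (idem _ (pw_inverse_idempotent ab)) => [ab0|]; last by right.
by left; rewrite ab.1 expr2 -mulrA ab0 mulr0.
Qed.

Lemma mulr_inverse_unique (S : comPzRingType) (y t t' : S) :
  y * t = 1 -> y * t' = 1 -> t = t'.
Proof. by move=> yt yt'; rewrite -[t]mulr1 -yt' mulrA [t * y]mulrC yt mul1r. Qed.

Record subring_pred (S : comPzRingType) (A : S -> Prop) : Prop := SubringPred {
  subring1 : A 1;
  subringB : forall x y, A x -> A y -> A (x - y);
  subringM : forall x y, A x -> A y -> A (x * y) }.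

Record subfield_pred (S : comPzRingType) (K : S -> Prop) : Prop := SubfieldPred {
  subfield_subring : subring_pred K;
  subfieldV : forall x, K x -> x != 0 -> exists2 y, K y & x * y = 1 }.

Section SubringTheory.
Variables (S : comPzRingType) (A : S -> Prop).
Hypothesis subA : subring_pred A.

Lemma subring0 : A 0.
Proof. by rewrite -(subrr 1); apply: (subringB subA); apply: (subring1 subA). Qed.

Lemma subringN x : A x -> A (- x).
Proof. by move=> Ax; rewrite -sub0r; apply: (subringB subA) => //; apply: subring0. Qed.

Lemma subringD x y : A x -> A y -> A (x + y).
Proof.
by move=> Ax Ay; rewrite -[y]opprK; apply: (subringB subA) => //; apply: subringN.
Qed.

End SubringTheory.

Lemma image_subring (R S : comPzRingType) (phi : {rmorphism R -> S}) :
  subring_pred (in_image phi).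
Proof.
split; first by exists 1; rewrite rmorph1.
  by move=> _ _ [r <-] [r' <-]; exists (r - r'); rewrite rmorphB.
by move=> _ _ [r <-] [r' <-]; exists (r * r'); rewrite rmorphM.
Qed.

Definition fraction_closure (S : comPzRingType) (A : S -> Prop) (x : S) : Prop :=
  exists a b u, [/\ A a, A b, b * u = 1 & x = a * u].

Section FractionClosure.
Variables (S : comPzRingType) (A : S -> Prop).
Hypothesis subA : subring_pred A.
Local Notation K := (fraction_closure A).

Lemma sub_fraction_closure a : A a -> K a.
Proof. by move=> Aa; exists a, 1, 1; split; rewrite ?mulr1 //; apply: (subring1 subA). Qed.

Lemma fraction_closureB x y : K x -> K y -> K (x - y).
Proof.
move=> [a [b [u [Aa Ab bu ->]]]] [a' [b' [u' [Aa' Ab' bu' ->]]]].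
exists (a * b' - a' * b), (b * b'), (u * u'); split.
- by apply: (subringB subA); apply: (subringM subA).
- exact: (subringM subA).
- by rewrite mulrACA bu bu' mulr1.
- transitivity (a * u * (b' * u') - a' * u' * (b * u)); first by rewrite bu bu' !mulr1.
  ring.
Qed.

Lemma fraction_closureM x y : K x -> K y -> K (x * y).
Proof.
move=> [a [b [u [Aa Ab bu ->]]]] [a' [b' [u' [Aa' Ab' bu' ->]]]].
exists (a * a'), (b * b'), (u * u'); split; try exact: (subringM subA).
  by rewrite mulrACA bu bu' mulr1.
by rewrite mulrACA.
Qed.

Hypothesis unitA : forall a, A a -> a = 0 \/ exists u, a * u = 1.

Lemma fraction_closure_subfield : subfield_pred K.
Proof.
split.
  split; [exact/sub_fraction_closure/(subring1 subA) | exact: fraction_closureB |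
          exact: fraction_closureM].
move=> _ [a [b [u [Aa Ab bu ->]]]] au0.
case: (unitA Aa) => [a0|[v av]]; first by move: au0; rewrite a0 mul0r eqxx.
exists (b * v); first by exists b, a, v.
by rewrite mulrACA [u * v]mulrC -mulrACA av bu mulr1.
Qed.

End FractionClosure.

Definition submodule_over (S : comPzRingType) (K W : S -> Prop) : Prop :=
  (forall x y, W x -> W y -> W (x + y)) /\ (forall k x, K k -> W x -> W (k * x)).

Lemma submodule_over0 (S : comPzRingType) (K W : S -> Prop) x :
  subring_pred K -> submodule_over K W -> W x -> W 0.
Proof. by move=> subK [_ WM] Wx; rewrite -(mul0r x); apply: WM => //; apply: subring0. Qed.

Lemma subfield_mul_eq1 (S : comNzRingType) (K : S -> Prop) k x :
  subfield_pred K -> K k -> k * x = 1 -> K x.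
Proof.
move=> fieldK Kk kx; have [k0|kn0] := eqVneq k 0.
  by move: kx; rewrite k0 mul0r => /eqP; rewrite eq_sym oner_eq0.
have [k' Kk' kk'] := subfieldV fieldK Kk kn0.
by rewrite (mulr_inverse_unique kx kk').
Qed.

Section Projection.
Variables (S : comNzRingType) (K : S -> Prop).
Hypothesis fieldK : subfield_pred K.
Let subK := subfield_subring fieldK.
Variable s : S.
Hypothesis Kn_s : ~ K s.

Lemma exists_maximal_submodule : exists W : set S,
  [/\ submodule_over K W, W s, ~ W 1 &
      forall B, (W `<` B)%classic -> submodule_over K B -> B 1].
Proof.
(* The empty set is admitted so that the empty chain has an upper bound. *)
pose admissible (W : set S) := W = set0 \/ [/\ submodule_over K W, W s & ~ W 1].
have [W [admW Wmax]] : exists W, admissible W /\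
    forall B, (W `<` B)%classic -> ~ admissible B.
  apply: Zorn_bigcup => F Fadm Ftot.
  have [[X0 FX0 [x0 X0x0]]|Fempty] := pselect (exists2 X, F X & exists x, X x); last first.
    left; apply/seteqP; split => // x [X FX Xx].
    by apply: Fempty; exists X => //; exists x.
  have FXadm X x : F X -> X x -> [/\ submodule_over K X, X s & ~ X 1].
    by move=> FX Xx; case: (Fadm X FX) => // Xempty; rewrite Xempty in Xx.
  right; split; [split|..].
  - move=> x y [X FX Xx] [Y FY Yy].
    have [XY|YX] := Ftot X Y FX FY.
    + have [[YD _] _ _] := FXadm Y y FY Yy.
      by exists Y => //; apply: YD => //; apply: XY.
    + have [[XD _] _ _] := FXadm X x FX Xx.
      by exists X => //; apply: XD => //; apply: YX.
  - move=> k x Kk [X FX Xx]; have [[_ XM] _ _] := FXadm X x FX Xx.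
    by exists X => //; apply: XM.
  - by exists X0 => //; case: (FXadm X0 x0 FX0 X0x0).
  - by move=> [X FX X1]; case: (FXadm X 1 FX X1).
have [subW Ws Wn1] : [/\ submodule_over K W, W s & ~ W 1].
  case: admW => // Wempty; exfalso.
  apply: (Wmax [set k * s | k in K]%classic).
    rewrite Wempty; split => // /(_ s); apply.
    by exists 1; [exact: (subring1 subK) | exact: mul1r].
  right; split; [split|..].
  - move=> _ _ [k Kk <-] [k' Kk' <-]; rewrite -mulrDl.
    by exists (k + k') => //; apply: subringD.
  - move=> k _ Kk [k' Kk' <-]; rewrite mulrA.
    by exists (k * k') => //; apply: (subringM subK).
  - by exists 1; [exact: (subring1 subK) | exact: mul1r].
  - move=> [k Kk ks1]; apply: Kn_s; exact: (subfield_mul_eq1 fieldK Kk ks1).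
exists W; split => // B WB subB; apply: contrapT => B1.
apply: (Wmax B WB); right; split => //; apply: WB.1; exact: Ws.
Qed.

Section MaximalSubmodule.
Variable W : set S.
Hypotheses (subW : submodule_over K W) (Ws : W s) (Wn1 : ~ W 1).
Hypothesis Wmax : forall B, (W `<` B)%classic -> submodule_over K B -> B 1.

Let WD : forall x y, W x -> W y -> W (x + y). Proof. exact: subW.1. Qed.
Let WM : forall k x, K k -> W x -> W (k * x). Proof. exact: subW.2. Qed.

Let WB x y : W x -> W y -> W (x - y).
Proof.
move=> Wx Wy; apply: WD => //; rewrite -mulN1r; apply: WM => //.
exact/(subringN subK)/(subring1 subK).
Qed.

Lemma maximal_submodule_decomp_unique x k k' :
  K k -> K k' -> W (x - k) -> W (x - k') -> k = k'.
Proof.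
move=> Kk Kk' Wk Wk'; apply/eqP; rewrite -subr_eq0; apply/negPn/negP => kk'n0.
have [v Kv kv] := subfieldV fieldK (subringB subK Kk Kk') kk'n0.
apply: Wn1; rewrite -kv mulrC; apply: WM => //.
have -> : k - k' = (x - k') - (x - k) by ring.
exact: WB.
Qed.

(* Otherwise W + K x strictly contains W, hence contains some 1 = w + k x,
   and then x - k^-1 = - k^-1 w lies in W. *)
Lemma maximal_submodule_decomp x : exists2 k, K k & W (x - k).
Proof.
apply: contrapT => nodecomp.
pose B y := exists w k, [/\ W w, K k & y = w + k * x].
have [w [k [Ww Kk E1]]] : B 1.
  apply: (Wmax (B := B)); split.
  - by move=> y Wy; exists y, 0; rewrite mul0r addr0; split => //; apply: subring0.
  - move=> BW; apply: nodecomp; exists 0; first exact: subring0.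
    rewrite subr0; apply: BW; exists 0, 1; rewrite mul1r add0r.
    by split; [apply: (submodule_over0 subK subW Ws) | apply: (subring1 subK) |].
  - move=> _ _ [w [k [Ww Kk ->]]] [w' [k' [Ww' Kk' ->]]].
    exists (w + w'), (k + k'); rewrite mulrDl addrACA.
    by split => //; [exact: WD | exact: subringD].
  - move=> k _ Kk [w [k' [Ww Kk' ->]]].
    exists (k * w), (k * k'); rewrite mulrDr mulrA.
    by split => //; [exact: WM | exact: (subringM subK)].
have [k0|kn0] := eqVneq k 0; first by apply: Wn1; rewrite E1 k0 mul0r addr0.
have [k' Kk' kk'] := subfieldV fieldK Kk kn0.
apply: nodecomp; exists k' => //.
have -> : x - k' = (- k') * w.
  transitivity (x * (k * k') - k' * (w + k * x)); first by rewrite kk' -E1 !mulr1.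
  ring.
by apply: WM => //; apply: subringN.
Qed.

Definition submodule_projection x : S := s2val (cid2 (maximal_submodule_decomp x)).

Lemma submodule_projectionP x :
  K (submodule_projection x) /\ W (x - submodule_projection x).
Proof. by rewrite /submodule_projection; case: cid2. Qed.

Lemma submodule_projection_eq x k : K k -> W (x - k) -> submodule_projection x = k.
Proof.
have [Kp Wp] := submodule_projectionP x.
by move=> Kk Wk; apply: (maximal_submodule_decomp_unique Kp Kk Wp Wk).
Qed.

Lemma submodule_projection_linear : linear_over K submodule_projection.
Proof.
have Kp x := (submodule_projectionP x).1.
have Wp x := (submodule_projectionP x).2.
split=> [x y|k x Kk]; apply: submodule_projection_eq.
- by apply: (subringD subK); apply: Kp.
- by rewrite opprD addrACA; apply: WD; apply: Wp.
- by apply: (subringM subK) => //; apply: Kp.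
- by rewrite -mulrBr; apply: WM => //; apply: Wp.
Qed.

End MaximalSubmodule.

Lemma exists_linear_projection :
  exists p, [/\ linear_over K p, p 1 = 1 & p s = 0].
Proof.
have [W [subW Ws Wn1 Wmax]] := exists_maximal_submodule.
exists (submodule_projection subW Ws Wn1 Wmax); split.
- exact: submodule_projection_linear.
- apply: submodule_projection_eq; first exact: (subring1 subK).
  by rewrite subrr; apply: (submodule_over0 subK subW Ws).
- apply: submodule_projection_eq; first exact: subring0.
  by rewrite subr0.
Qed.

End Projection.

(* A projection onto K killing s is image-linear, so s = s * p 1 = p s = 0. *)
Lemma ring_epi_subfield_full (R : comPzRingType) (S : comNzRingType)
    (phi : {rmorphism R -> S}) (K : S -> Prop) :
  ring_epi phi -> subfield_pred K -> (forall a, in_image phi a -> K a) ->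
  forall s, K s.
Proof.
move=> epi fieldK imK s; apply: contrapT => Kn_s.
have [p [pK p1 ps]] := exists_linear_projection fieldK Kn_s.
have := ring_epi_linear_over s epi (linear_overW imK pK).
rewrite ps p1 mulr1 => s0; apply: Kn_s; rewrite -s0.
exact: subring0 (subfield_subring fieldK).
Qed.

Local Open Scope quotient_scope.
Local Notation "x %:F" := (@FracField.tofrac _ x).

Lemma fraction_numden (D : idomainType) (x : {fraction D}) :
  x = (\n_(repr x))%:F / (\d_(repr x))%:F.
Proof.
rewrite -[x in LHS]reprK; case: (repr x) => -[n d] /= dn0.
apply: (mulIf (_ : d%:F != 0)); first by rewrite tofrac_eq0.
rewrite divfK ?tofrac_eq0 //; unlock FracField.tofrac.
rewrite !piE; apply/eqmodP; rewrite /= FracField.equivfE /FracField.mulf /=.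
by rewrite !numden_Ratio ?mulf_neq0 ?oner_eq0 //= !mulr1 mulrC.
Qed.

Lemma fraction_rep (D : idomainType) (x : {fraction D}) :
  exists n d, d != 0 /\ x = n%:F / d%:F.
Proof.
by exists \n_(repr x), \d_(repr x); split; [apply: denom_ratioP | apply: fraction_numden].
Qed.

Section FractionLift.
Variables (D : idomainType) (S : comNzRingType) (i : {rmorphism D -> S}).
Variable inv : S -> S.
Hypothesis invP : forall d, d != 0 -> i d * inv (i d) = 1.

Definition frac_lift (x : {fraction D}) : S := i \n_(repr x) * inv (i \d_(repr x)).

Lemma lift_inv_mul d d' :
  d != 0 -> d' != 0 -> inv (i (d * d')) = inv (i d) * inv (i d').
Proof.
move=> dn0 d'n0; apply: (mulr_inverse_unique (invP (mulf_neq0 dn0 d'n0))).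
by rewrite rmorphM mulrACA !invP // mulr1.
Qed.

Lemma lift_cross n d n' d' : d != 0 -> d' != 0 -> n * d' = n' * d ->
  i n * inv (i d) = i n' * inv (i d').
Proof.
move=> dn0 d'n0 cross.
transitivity (i n * inv (i d) * (i d' * inv (i d'))); first by rewrite invP // mulr1.
transitivity (i n' * inv (i d') * (i d * inv (i d))); last by rewrite invP // mulr1.
transitivity (i (n * d') * (inv (i d) * inv (i d'))); first by rewrite rmorphM; ring.
by rewrite cross rmorphM; ring.
Qed.

Lemma frac_lift_div n d : d != 0 -> frac_lift (n%:F / d%:F) = i n * inv (i d).
Proof.
move=> dn0; rewrite /frac_lift; set r := repr _.
have E := fraction_numden (n%:F / d%:F); rewrite -/r in E.
apply: lift_cross => //; first exact: denom_ratioP.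
apply/eqP; rewrite -tofrac_eq !tofracM -eqr_div ?tofrac_eq0 ?denom_ratioP //.
by rewrite -E.
Qed.

Lemma frac_lift_tofrac d : frac_lift d%:F = i d.
Proof.
have inv1 : inv 1 = 1 by have := invP (oner_neq0 D); rewrite rmorph1 mul1r.
by rewrite -[d%:F]divr1 -tofrac1 frac_lift_div ?oner_eq0 // rmorph1 inv1 mulr1.
Qed.

Lemma frac_lift_is_zmod : zmod_morphism frac_lift.
Proof.
move=> x y.
have [n [d [dn0 ->]]] := fraction_rep x; have [n' [d' [d'n0 ->]]] := fraction_rep y.
have -> : n%:F / d%:F - n'%:F / d'%:F = (n * d' - n' * d)%:F / (d * d')%:F.
  by rewrite -mulNr addf_div ?tofrac_eq0 // tofracB !tofracM mulNr.
rewrite !frac_lift_div ?mulf_neq0 // lift_inv_mul // rmorphB !rmorphM mulrBl.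
by rewrite mulrACA invP // mulr1 [inv (i d) * _]mulrC mulrACA invP // mulr1.
Qed.

Lemma frac_lift_is_monoid : monoid_morphism frac_lift.
Proof.
split; first by rewrite -tofrac1 frac_lift_tofrac rmorph1.
move=> x y.
have [n [d [dn0 ->]]] := fraction_rep x; have [n' [d' [d'n0 ->]]] := fraction_rep y.
rewrite mulf_div -!tofracM !frac_lift_div ?mulf_neq0 // lift_inv_mul // rmorphM.
by rewrite mulrACA.
Qed.

HB.instance Definition _ :=
  GRing.isZmodMorphism.Build {fraction D} S frac_lift frac_lift_is_zmod.
HB.instance Definition _ :=
  GRing.isMonoidMorphism.Build {fraction D} S frac_lift frac_lift_is_monoid.

Definition frac_lift_rmorphism : {rmorphism {fraction D} -> S} := frac_lift.

Lemma frac_lift_bijective :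
  (forall s, fraction_closure (in_image i) s) -> bijective frac_lift.
Proof.
move=> closure.
have surj s : exists x, frac_lift x = s.
  have [_ [_ [u [[n <-] [d <-] du ->]]]] := closure s.
  have dn0 : d != 0.
    by apply: contra_eq_neq du => ->; rewrite rmorph0 mul0r eq_sym oner_neq0.
  by exists (n%:F / d%:F); rewrite frac_lift_div // (mulr_inverse_unique (invP dn0) du).
exists (fun s => projT1 (cid (surj s))) => [x|s]; last by case: cid.
by apply: (fmorph_inj frac_lift_rmorphism); case: cid.
Qed.

End FractionLift.

Theorem lemma3p6 (R : comPzRingType) (S : comNzRingType)
    (phi : {rmorphism R -> S}) :
  ring_epi phi ->
  only_trivial_idempotents S ->
  (forall r : R, exists b : S, pw_inverse (phi r) b) ->
  (forall a b : S, in_image phi a -> in_image phi b ->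
     a * b = 0 -> a = 0 \/ b = 0)
  /\
  (forall (D : idomainType) (i : {rmorphism D -> S}),
     injective i -> (forall s : S, in_image i s <-> in_image phi s) ->
     exists F : {rmorphism {fraction D} -> S},
       (forall d : D, F (@FracField.tofrac D d) = i d) /\ bijective F)
  /\
  (forall s : S, s <> 0 -> exists t : S, s * t = 1).
Proof.
move=> epi idem pwinv.
have unitA a : in_image phi a -> a = 0 \/ exists u, a * u = 1.
  move=> [r <-]; have [b /(pw_inverse_unit_or_zero idem)] := pwinv r.
  by case=> [|rb]; [left | right; exists b].
have fieldK := fraction_closure_subfield (image_subring phi) unitA.
have fullK := ring_epi_subfield_full epi fieldK
  (sub_fraction_closure (image_subring phi)).
have inv_ex (s : S) : exists t, s != 0 -> s * t = 1.
  have [_|/(subfieldV fieldK (fullK s))[t _ st]] := eqVneq s 0; first by exists 0.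
  by exists t.
split; [|split].
- move=> a b Aa _ ab0; have [->|[u au]] := unitA a Aa; [by left | right].
  by rewrite -[b]mul1r -au mulrAC ab0 mul0r.
- move=> D i i_inj iA; pose inv s := projT1 (cid (inv_ex s)).
  have invP d : d != 0 -> i d * inv (i d) = 1.
    by move=> dn0; rewrite /inv; case: cid => t; apply; rewrite raddf_eq0.
  exists (frac_lift_rmorphism invP); split; first exact: frac_lift_tofrac.
  apply: (@frac_lift_bijective _ _ _ _ invP) => s.
  have [a [b [u [Aa Ab bu ->]]]] := fullK s.
  by exists a, b, u; split => //; apply/iA.
- move=> s /eqP sn0; have [t _ st] := subfieldV fieldK (fullK s) sn0.
  by exists t.
Qed.
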